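(* For every prime $p\ge 3$ we have $n(\mathbb{Z}_p) \le \frac{3p-1}{2}$.
   Context: For an integer $n\ge 1$, $\overleftrightarrow{K}_n$ denotes the complete digraph on $n$ vertices whose arc set consists of all ordered pairs $(x,y)$ of distinct vertices. For a set $A$, an $A$-arc-labelling of $\overleftrightarrow{K}_n$ is a function $w$ from the arc set of $\overleftrightarrow{K}_n$ to $A$. If $(A,+)$ is an Abelian group, $w$ is called zero-sum-free if there is no directed cycle (including directed cycles of length two) for which the sum of the arc-labels is $0$. For a non-trivial finite Abelian group $A$, $n(A)\ge 2$ is the smallest integer such that $\overleftrightarrow{K}_{n(A)}$ has no zero-sum-free $A$-arc-labelling. $\mathbb{Z}_p$ denotes the cyclic group of order $p$. *)

From mathcomp Require Import all_boot all_order all_algebra.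
Set Implicit Arguments. Unset Strict Implicit. Unset Printing Implicit Defensive.
Import GRing.Theory.
Local Open Scope ring_scope.

(* An A-arc-labelling of the complete digraph on vertex set 'I_n: the label
   of the arc (x,y), x <> y, is w x y (values w x x are irrelevant). *)
Definition arc_labelling (A : Type) (n : nat) := 'I_n -> 'I_n -> A.

(* A directed cycle is given by a duplicate-free sequence s = [v0;...;v_{k-1}]
   of k >= 2 vertices, with arcs v0->v1, ..., v_{k-2}->v_{k-1}, v_{k-1}->v0,
   i.e. the pairs of zip s (rot 1 s). *)
Definition cycle_weight (A : zmodType) (n : nat) (w : arc_labelling A n)
  (s : seq 'I_n) : A :=
  \sum_(e <- zip s (rot 1 s)) w e.1 e.2.

Definition zero_sum_free (A : zmodType) (n : nat) (w : arc_labelling A n) :=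
  forall s : seq 'I_n, (2 <= size s)%N -> uniq s -> cycle_weight w s != 0.

(* "n(A) <= m": since n(A) is the smallest integer >= 2 such that the complete
   digraph on n(A) vertices has no zero-sum-free A-arc-labelling, n(A) <= m
   holds iff some k with 2 <= k <= m has this property. *)
Definition nA_le (A : zmodType) (m : nat) :=
  exists k : nat, [/\ (2 <= k)%N, (k <= m)%N &
    forall w : arc_labelling A k, ~ zero_sum_free w].

(* Let w be a zero-sum-free Z_p-labelling of the complete digraph on the
   vertices 0, ..., 3k, where k = (p - 1)/2.  Grow simple paths from 0 block by
   block, block j being {3j-2, 3j-1, 3j}, and let T_j be a set of weights of
   paths from 0 through vertices <= 3j that all end at one vertex e_j.  The
   vertices of the next block can be ordered u, v, z so that the three detours
   e_j -> z, e_j -> v -> z and e_j -> u -> v -> z have distinct weights: this only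
   needs the 2- and 3-cycles to have nonzero weight (applied to w shifted by the
   potential w(e_j, .), which leaves cycle weights unchanged) and 2 to be
   invertible.  By Cauchy-Davenport |T_(j+1)| >= min(p, |T_j| + 2), so T_k is all
   of Z_p; in particular it contains -w(e_k, 0), and closing that path back to 0
   gives a cycle of weight 0. *)

From mathcomp Require Import all_boot all_order all_algebra.
From mathcomp Require Import zify.
Set Implicit Arguments. Unset Strict Implicit. Unset Printing Implicit Defensive.
Import GRing.Theory.
Local Open Scope ring_scope.

Definition sumset (G : finZmodType) (A B : {set G}) := [set a + b | a in A, b in B].

Section Sumsets.
Variable G : finZmodType.
Implicit Types A B : {set G}.

Lemma leq_card_sumset A B b : b \in B -> (#|A| <= #|sumset A B|)%N.
Proof.
move=> bB; rewrite -(card_imset A (addIr b)); apply: subset_leq_card.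
by apply/subsetP=> _ /imsetP[a aA ->]; apply/imset2P; exists a b.
Qed.

Section DavenportTransform.
Variables (A B : {set G}) (e : G).
Let A' := A :|: [set z + e | z in B].
Let B' := [set z in B | z + e \in A].

Lemma sumset_davenport_sub : sumset A' B' \subset sumset A B.
Proof.
apply/subsetP=> _ /imset2P[a b aA' + ->]; rewrite inE => /andP[bB beA].
case/setUP: aA' => [aA|/imsetP[z zB ->]]; apply/imset2P; first by exists a b.
by exists (b + e) z => //; rewrite addrAC [RHS]addrAC [z + b]addrC.
Qed.

Lemma card_davenport : (#|A'| + #|B'| = #|A| + #|B|)%N.
Proof.
have AI : A :&: [set z + e | z in B] = [set z + e | z in B'].
  apply/setP=> t; rewrite inE; apply/andP/imsetP => [[tA /imsetP[z zB tz]]|].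
    by exists z; rewrite // inE zB -tz.
  by case=> z /[!inE] /andP[zB zA] ->; split => //; apply: imset_f.
have := cardsUI A [set z + e | z in B].
by rewrite AI !card_imset //; apply: addIr.
Qed.

End DavenportTransform.
End Sumsets.

Section PrimeField.
Variables (p : nat) (p_pr : prime p).

Lemma card_Zp_prime : #|[set: 'Z_p]| = p.
Proof. by rewrite cardsT card_ord Zp_cast ?prime_gt1. Qed.

Lemma unitZp_primeE (c : 'Z_p) : (c \is a GRing.unit) = (c != 0).
Proof.
apply/idP/idP => [|c0]; first by apply: contraTneq => ->; rewrite unitr0.
rewrite -[c]natr_Zp unitZpE ?prime_gt1 // prime_coprime //.
apply: contra c0 => /eqP pc; apply/eqP/val_inj.
by rewrite /= -[c]natr_Zp val_Zp_nat ?prime_gt1.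
Qed.

Lemma Zp_prime_natmul_onto (c y : 'Z_p) : c != 0 -> exists m, y = c *+ m.
Proof.
rewrite -unitZp_primeE => cu; exists (c^-1 * y).
by rewrite -mulr_natr natr_Zp mulVKr.
Qed.

Lemma Zp_prime_translate_closed (A : {set 'Z_p}) (c : 'Z_p) :
  c != 0 -> A != set0 -> (forall a, a \in A -> a + c \in A) -> A = setT.
Proof.
move=> c0 /set0Pn[a0 a0A] Ac; apply/setP=> x; rewrite inE.
have Am m : a0 + c *+ m \in A.
  by elim: m => [|m IH]; rewrite ?addr0 // mulrS addrCA addrC Ac.
have [m xm] := Zp_prime_natmul_onto (x - a0) c0.
by have := Am m; rewrite -xm addrC subrK.
Qed.

Theorem cauchy_davenport (A B : {set 'Z_p}) : A != set0 -> B != set0 ->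
  (minn p (#|A| + #|B| - 1) <= #|sumset A B|)%N.
Proof.
move Bn: #|B| => n; elim/ltn_ind: n A B Bn => n IH A B Bn An0 /set0Pn[b bB].
have AB_ge := leq_card_sumset A bB.
(* Either the Davenport transform with e = a - x removes y from B, or A is
   stable under all differences of B and hence is the whole group. *)
case: (boolP [exists a in A, exists x in B, exists y in B, y + (a - x) \notin A]).
  case/exists_inP=> a aA /exists_inP[x xB /exists_inP[y yB yA]].
  set e := a - x; set B' := [set z in B | z + e \in A].
  have xB' : x \in B' by rewrite inE xB /e addrC subrK.
  have ltB' : (#|B'| < n)%N.
    rewrite -Bn; apply/proper_card/properP; split; last by exists y; rewrite ?inE ?yB.
    by apply/subsetP=> z; rewrite inE => /andP[].
  have A'n0 : A :|: [set z + e | z in B] != set0 by apply/set0Pn; exists a; rewrite inE aA.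
  apply: leq_trans (subset_leq_card (sumset_davenport_sub A B e)).
  rewrite -Bn -(card_davenport A B e); apply: IH ltB' _ _ erefl A'n0 _.
  by apply/set0Pn; exists x.
move/exists_inPn=> AB; have [B1|] := leqP #|B| 1.
  apply: leq_trans (geq_minr _ _) (leq_trans _ AB_ge).
  by rewrite leq_subLR addnC leq_add2r -Bn.
case/card_gt1P=> [x [y [xB yB xy]]].
suff AT : A = setT.
  by rewrite AT card_Zp_prime in AB_ge *; apply: leq_trans (geq_minl _ _) AB_ge.
apply: (Zp_prime_translate_closed (c := y - x)) => // [|a aA].
  by rewrite subr_eq0 eq_sym.
apply: contraR (AB a aA) => yA; apply/exists_inP; exists x => //.
by apply/exists_inP; exists y; rewrite // addrCA.
Qed.

Lemma Zp_two_torsion_free : (2 < p)%N -> forall x : 'Z_p, x + x = 0 -> x = 0.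
Proof.
move=> p_gt2 x x2; have p_gt1 := prime_gt1 p_pr.
have u2 : (2%:R : 'Z_p) \is a GRing.unit.
  by rewrite unitZpE // prime_coprime //; apply/negP => /dvdn_leq; lia.
by rewrite -(mulrK u2 x) mulr_natr mulr2n x2 mul0r.
Qed.

Lemma odd_prime_half : (2 < p)%N -> (2 * p./2 + 1)%N = p.
Proof.
move=> p_gt2; have p_odd : odd p by case: (even_prime p_pr) p_gt2 => [->|].
by have := odd_double_half p; rewrite p_odd -muln2; lia.
Qed.

End PrimeField.

Fixpoint path_weight (A : zmodType) (T : Type) (w : T -> T -> A) (x : T) (t : seq T)
    : A :=
  if t is y :: t' then w x y + path_weight w y t' else 0.

Section CycleWeights.
Variables (A : zmodType) (n : nat) (w : arc_labelling A n).

Lemma path_weight_cat x t1 t2 :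
  path_weight w x (t1 ++ t2) = path_weight w x t1 + path_weight w (last x t1) t2.
Proof. by elim: t1 x => [|y t IH] x /=; rewrite ?add0r // IH addrA. Qed.

Lemma cycle_weight_cons x t : cycle_weight w (x :: t) = path_weight w x t + w (last x t) x.
Proof.
rewrite /cycle_weight rot1_cons; move: {2 5}x => z.
elim: t x => [|y t IH] x /=; first by rewrite big_cons big_nil add0r addr0.
by rewrite big_cons IH addrA.
Qed.

Lemma cycle_weight_shift (phi : 'I_n -> A) s :
  cycle_weight (fun i k => phi i + w i k - phi k) s = cycle_weight w s.
Proof.
rewrite /cycle_weight !big_split sumrN /=.
rewrite -(big_map fst predT phi) -(big_map snd predT phi).
rewrite [map fst _]unzip1_zip ?[map snd _]unzip2_zip ?size_rot //.
by rewrite (perm_big _ (permEl (perm_rot 1 s))) addrAC subrr add0r.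
Qed.

Lemma zero_sum_free_shift (phi : 'I_n -> A) :
  zero_sum_free w -> zero_sum_free (fun i k => phi i + w i k - phi k).
Proof. by move=> w_zsf s s2 us; rewrite cycle_weight_shift; apply: w_zsf. Qed.

Lemma zero_sum_free_cycle2 i k :
  zero_sum_free w -> i != k -> w i k + w k i != 0.
Proof.
move=> w_zsf ik; have := w_zsf [:: i; k] isT.
by rewrite cycle_weight_cons /= inE ik addr0; apply.
Qed.

Lemma zero_sum_free_cycle3 i k l :
  zero_sum_free w -> uniq [:: i; k; l] -> w i k + w k l + w l i != 0.
Proof.
move=> w_zsf ikl; have := w_zsf [:: i; k; l] isT ikl.
by rewrite cycle_weight_cons /= addr0.
Qed.

End CycleWeights.

Section SumFreePairs.
Variable R : zmodType.

Definition sum_free_pair (x y : R) := [&& x != 0, y != 0 & x + y != 0].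

Definition at_most_one_zero (x1 x2 x3 : R) := ((x1 == 0%R) + (x2 == 0%R) + (x3 == 0%R) <= 1)%N.

Lemma sum_free_pairC x y : sum_free_pair x y = sum_free_pair y x.
Proof. by rewrite /sum_free_pair addrC andbA [(x != 0) && _]andbC -andbA. Qed.

Lemma uniq_partial_sums (s x y : R) : uniq [:: s; s + x; s + x + y] = sum_free_pair x y.
Proof.
rewrite /= !inE !negb_or andbT /sum_free_pair -addrA.
rewrite -{1 3}[s]addr0 !(inj_eq (addrI s)) -{3}[x]addr0 (inj_eq (addrI x)) !(eq_sym 0).
by case: (x == 0); case: (y == 0); case: (x + y == 0).
Qed.

(* The triangle a -> c -> b -> a meets the reversed arcs of a -> b -> c -> a in
   the order z3, z2, z1. *)
Lemma at_most_one_zero_either x1 x2 x3 z1 z2 z3 :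
  x1 + z1 != 0 -> x2 + z2 != 0 -> x3 + z3 != 0 ->
  at_most_one_zero x1 x2 x3 || at_most_one_zero z3 z2 z1.
Proof.
have zeros (x z : R) : x + z != 0 -> ((x == 0%R) + (z == 0%R) <= 1)%N.
  by case: (eqVneq x 0) => [->|_]; case: (eqVneq z 0) => [->|_] //; rewrite addr0 eqxx.
by move=> /zeros h1 /zeros h2 /zeros h3; apply/orP; rewrite /at_most_one_zero; lia.
Qed.

Hypothesis R2 : forall x : R, x + x = 0 -> x = 0.

Lemma sum_free_pair_cycle3 x1 x2 x3 :
  x1 + x2 + x3 != 0 -> at_most_one_zero x1 x2 x3 ->
  [|| sum_free_pair x1 x2, sum_free_pair x2 x3 | sum_free_pair x3 x1].
Proof.
rewrite /at_most_one_zero /sum_free_pair.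
case: (eqVneq x1 0) => [->|n1]; case: (eqVneq x2 0) => [->|n2];
  case: (eqVneq x3 0) => [->|n3] //=; rewrite ?add0r ?addr0 => s0 _;
  rewrite ?s0 //; first by rewrite addrC.
apply/negPn/negP; rewrite !negb_or !negbK !addr_eq0 => /and3P[/eqP e12 /eqP e23 /eqP e31].
by move/eqP: n1; apply; apply: R2; rewrite {1}e12 e23 opprK e31 addNr.
Qed.

Lemma sum_free_rotation (T : eqType) (y : T -> T -> R) (a b c : T) :
  y a b + y b c + y c a != 0 -> at_most_one_zero (y a b) (y b c) (y c a) ->
  exists u v z, perm_eq [:: u; v; z] [:: a; b; c] /\ sum_free_pair (y u v) (y v z).
Proof.
move=> /sum_free_pair_cycle3/[apply]/or3P[].
- by exists a, b, c.
- by exists b, c, a; split; first exact: (permEl (perm_rot 1 [:: a; b; c])).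
- by exists c, a, b; split; first exact: (permEl (perm_rot 2 [:: a; b; c])).
Qed.

Lemma zero_sum_free_ordering n (y : arc_labelling R n) (a b c : 'I_n) :
  zero_sum_free y -> uniq [:: a; b; c] ->
  exists u v z, perm_eq [:: u; v; z] [:: a; b; c] /\ sum_free_pair (y u v) (y v z).
Proof.
move=> y_zsf abc; have acb_abc : perm_eq [:: a; c; b] [:: a; b; c].
  by rewrite perm_cons; exact: (permEl (perm_rot 1 [:: b; c])).
have acb : uniq [:: a; c; b] by rewrite (perm_uniq acb_abc).
move: (abc); rewrite /= !inE !negb_or => /and3P[/andP[ab ac] bc _].
have ca : c != a by rewrite eq_sym.
have := at_most_one_zero_either (zero_sum_free_cycle2 y_zsf ab)
  (zero_sum_free_cycle2 y_zsf bc) (zero_sum_free_cycle2 y_zsf ca).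
case/orP=> [abc0|acb0]; first exact: sum_free_rotation (zero_sum_free_cycle3 y_zsf abc) abc0.
have [u [v [z [uvz_acb uvz]]]] := sum_free_rotation (zero_sum_free_cycle3 y_zsf acb) acb0.
by exists u, v, z; split; first exact: perm_trans uvz_acb acb_abc.
Qed.

End SumFreePairs.

Lemma three_detours (R : zmodType) n (w : arc_labelling R n) (e a b c : 'I_n) :
  (forall x : R, x + x = 0 -> x = 0) -> zero_sum_free w -> uniq [:: a; b; c] ->
  exists u v z, perm_eq [:: u; v; z] [:: a; b; c] /\
    uniq [seq path_weight w e s | s <- [:: [:: z]; [:: v; z]; [:: u; v; z]]].
Proof.
(* y i k is the extra weight of the detour e -> i -> k over the arc e -> k. *)
move=> R2 w_zsf abc; pose y i k := w e i + w i k - w e k.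
have [u [v [z [uvz sf]]]] := zero_sum_free_ordering R2 (zero_sum_free_shift (w e) w_zsf) abc.
exists u, v, z; split => //.
have Ev : w e v + w v z = w e z + y v z by rewrite [RHS]addrC subrK.
have Eu : w e u + (w u v + w v z) = w e z + y v z + y u v.
  by rewrite -Ev [RHS]addrC [RHS]addrA /y subrK -addrA.
have -> : [seq path_weight w e s | s <- [:: [:: z]; [:: v; z]; [:: u; v; z]]] =
    [:: w e z; w e z + y v z; w e z + y v z + y u v] by rewrite /= !addr0 Ev Eu.
by rewrite uniq_partial_sums sum_free_pairC.
Qed.

Definition reachable_weight (A : zmodType) n (w : arc_labelling A n.+1)
    (m : nat) (e : 'I_n.+1) (x : A) :=
  exists t, [/\ uniq (ord0 :: t), all (fun v : 'I_n.+1 => v <= m)%N t,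
                last ord0 t = e & path_weight w ord0 t = x].

Lemma reachable_weight_cat (A : zmodType) n (w : arc_labelling A n.+1) m m' e x s :
  (m <= m')%N -> reachable_weight w m e x -> uniq s ->
  all (fun v : 'I_n.+1 => m < v <= m')%N s ->
  reachable_weight w m' (last e s) (x + path_weight w e s).
Proof.
move=> mm' [t [ut tm <- <-]] us sm; exists (t ++ s); split.
- rewrite -cat_cons cat_uniq ut us andbT; apply/hasPn => v /(allP sm) /andP[mv _].
  rewrite inE negb_or -val_eqE /= -lt0n (leq_ltn_trans _ mv) //=.
  by apply: contraL mv => /(allP tm); rewrite -leqNgt.
- by rewrite all_cat; apply/andP; split; [apply: sub_all tm | apply: sub_all sm] => v /=; lia.
- by rewrite last_cat.
- by rewrite path_weight_cat.
Qed.

Section Construction.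
Variables (p : nat) (p_pr : prime p) (p_gt2 : (2 < p)%N).
Variables (n : nat) (w : arc_labelling 'Z_p n.+1) (w_zsf : zero_sum_free w).

Lemma reachable_weight_block j e (T : {set 'Z_p}) :
  (3 * j + 3 <= n)%N -> T != set0 -> {in T, forall x, reachable_weight w (3 * j) e x} ->
  exists (e' : 'I_n.+1) (T' : {set 'Z_p}),
    [/\ (3 * j < e')%N, (minn p (#|T| + 2) <= #|T'|)%N &
         {in T', forall x, reachable_weight w (3 * j + 3) e' x}].
Proof.
move=> jn Tn0 Treach; pose blk (v : 'I_n.+1) := (3 * j < v <= 3 * j + 3)%N.
pose a : 'I_n.+1 := inord (3 * j + 1); pose b : 'I_n.+1 := inord (3 * j + 2).
pose c : 'I_n.+1 := inord (3 * j + 3).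
have [va vb vc] : [/\ a = 3 * j + 1 :> nat, b = 3 * j + 2 :> nat & c = 3 * j + 3 :> nat].
  by split; rewrite inordK //; lia.
have abc : uniq [:: a; b; c] by rewrite /= !inE -!val_eqE /= va vb vc; lia.
have abc_blk : all blk [:: a; b; c] by rewrite /= /blk va vb vc; lia.
have [u [v [z [uvz uniq_weights]]]] :=
  three_detours e (Zp_two_torsion_free p_pr p_gt2) w_zsf abc.
have [uvz_uniq uvz_blk] : uniq [:: u; v; z] /\ all blk [:: u; v; z].
  by rewrite (perm_uniq uvz) (perm_all _ uvz).
pose B := [set x in [seq path_weight w e (drop k [:: u; v; z]) | k <- [:: 2; 1; 0]%N]].
have cardB : #|B| = 3%N by rewrite cardsE; apply/card_uniqP.
exists z, (sumset T B); split.
- by have /andP[] := allP uvz_blk z (mem_last u [:: v; z]).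
- have := cauchy_davenport p_pr Tn0 (_ : B != set0); rewrite cardB -addnBA //.
  by apply; rewrite -card_gt0 cardB.
move=> _ /imset2P[x y xT + ->]; rewrite inE => /mapP[k k_in ->].
have zk : last e (drop k [:: u; v; z]) = z by move: k_in; rewrite !inE => /or3P[] /eqP ->.
rewrite -{1}zk.
apply: reachable_weight_cat (Treach x xT) (drop_uniq _ uvz_uniq) _; first lia.
by apply/allP => t /mem_drop /(allP uvz_blk).
Qed.

Lemma reachable_weight_blocks j : (3 * j <= n)%N ->
  exists (e : 'I_n.+1) (T : {set 'Z_p}),
    [/\ (0 < j)%N -> (0 < e)%N, (minn p (2 * j + 1) <= #|T|)%N &
         {in T, forall x, reachable_weight w (3 * j) e x}].
Proof.
elim: j => [_|j IH jn].
  exists ord0, [set 0]; split => //; first by rewrite cards1 geq_minr.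
  by move=> x /set1P ->; exists [::].
have [|e [T [_ cardT Treach]]] := IH; first lia.
have Tn0 : T != set0 by rewrite -card_gt0 (leq_trans _ cardT) // leq_min prime_gt0 // addn1.
have jn3 : (3 * j + 3 <= n)%N by lia.
have [e' [T' [je' cardT' T'reach]]] := reachable_weight_block jn3 Tn0 Treach.
exists e', T'; split.
- by move=> _; lia.
- by apply: leq_trans cardT'; move: cardT; move: #|T| => m; lia.
- by rewrite mulnS addnC.
Qed.

Lemma zero_sum_free_Zp_bound : (n < 3 * p./2)%N.
Proof.
rewrite ltnNge; apply/negP => pn.
have p_half := odd_prime_half p_pr p_gt2.
have [e [T [e_pos cardT Treach]]] := reachable_weight_blocks pn.
have T_full : T = setT.
  by apply/eqP; rewrite eqEcard subsetT card_Zp_prime // -{1}[p]minnn -{2}p_half.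
have /Treach[t [ut _ te tw]] : - w e ord0 \in T by rewrite T_full inE.
have t_cycle : (2 <= size (ord0 :: t))%N.
  case: t te {ut tw} => // te; suff : (0 < e)%N by rewrite -te.
  by apply: e_pos; lia.
by have := w_zsf t_cycle ut; rewrite cycle_weight_cons te tw addNr eqxx.
Qed.

End Construction.

Theorem theorem2 (p : nat) : prime p -> (3 <= p)%N ->
  nA_le [the zmodType of 'Z_p] ((3 * p - 1) %/ 2).
Proof.
move=> p_pr p_gt2; have p_half := odd_prime_half p_pr p_gt2.
exists (3 * p./2).+1; split; [lia | lia |].
by move=> w /(zero_sum_free_Zp_bound p_pr p_gt2); rewrite ltnn.
Qed.
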